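(* Let $\mathcal{L}:\mathbb{R}^d\to\mathbb{R}$ be differentiable with $\nabla\mathcal{L}$ Lipschitz continuous with constant $L$. Run full-batch MoFO with $\beta_1<\sqrt{\beta_2}<1$, $\epsilon=0$ and learning rates $\eta_t=\eta/\sqrt{t}$ ($\eta>0$). Then for all iterations $t\ge s\ge1$ and every coordinate $i$, $$|g_{i,t}-g_{i,s}|\le\|g_t-g_s\|_2\le\frac{2\sqrt2\,LC\eta\,(t-s)}{\sqrt t},$$ where $C=\dfrac{\sqrt{d\cdot(\alpha\%)+B}}{\sqrt{1-\beta_2}\,(1-\beta_1/\sqrt{\beta_2})}$.
   Context: The coordinates of $\mathbb{R}^d$ are partitioned into $B$ blocks of sizes $d_1,\dots,d_B$ with $\sum_kd_k=d$. Fix $\alpha\%\in(0,1]$. For $z\in\mathbb{R}^d$, $\texttt{FLT}_\alpha(z)\in\{0,1\}^d$ equals, in each block $k$, $1$ exactly on a set of $\lceil d_k\cdot\alpha\%\rceil$ indices with the largest absolute values of $z$ within that block (ties broken in favour of smaller indices), and $0$ elsewhere. Full-batch MoFO with $\beta_1,\beta_2\in(0,1)$, learning rates $\eta_t>0$, initial point $\theta_0$: $m_0=v_0=0$; for $t\ge1$, $g_t=\nabla\mathcal{L}(\theta_{t-1})$, $m_t=\beta_1m_{t-1}+(1-\beta_1)g_t$, $v_t=\beta_2v_{t-1}+(1-\beta_2)g_t\odot g_t$, $\hat m_t=m_t/(1-\beta_1^t)$, $\hat v_t=v_t/(1-\beta_2^t)$, $\theta_t=\theta_{t-1}-\eta_t(\hat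 m_t\odot\texttt{FLT}_\alpha(m_t))/\sqrt{\hat v_t}$ entrywise ($\epsilon=0$: no additive constant in the denominator; a quotient with $\hat v_{i,t}=0$ is taken as $0$). $g_{i,t}$ denotes the $i$-th coordinate of $g_t$. *)

From HB Require Import structures.
From mathcomp Require Import all_boot all_order all_algebra.
From mathcomp Require Import all_classical all_reals all_analysis.
Set Implicit Arguments. Unset Strict Implicit. Unset Printing Implicit Defensive.
Import Order.TTheory GRing.Theory Num.Theory.
Import numFieldNormedType.Exports.
Local Open Scope ring_scope.

Section MoFO.
Variables (R : realType) (d B : nat).
Implicit Types (x y z : 'rV[R]_d).

Definition norm2 x : R := Num.sqrt (\sum_(i < d) (x ord0 i) ^+ 2).

Definition dotp x y : R := \sum_(i < d) x ord0 i * y ord0 i.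

Definition is_gradient (f : 'rV[R]_d -> R) (grad : 'rV[R]_d -> 'rV[R]_d) :=
  forall x, differentiable f x /\ forall v, 'd f x v = dotp (grad x) v.

Definition blk_size (blk : 'I_d -> 'I_B) (k : 'I_B) : nat :=
  #|[set j : 'I_d | blk j == k]|.

(* Rank of coordinate i inside its block w.r.t. |z|, descending,
   ties broken in favour of smaller indices (0-based). *)
Definition blk_rank (blk : 'I_d -> 'I_B) z (i : 'I_d) : nat :=
  #|[set j : 'I_d | (blk j == blk i) &&
       ((`|z ord0 i| < `|z ord0 j|) || ((`|z ord0 j| == `|z ord0 i|) && (j < i)%N))]|.

(* FLT_alpha(z): in each block k, 1 exactly on the ceil(d_k * alpha)
   coordinates with the largest |z| (ties to smaller index), 0 elsewhere. *)
Definition FLT (blk : 'I_d -> 'I_B) (alpha : R) z : 'rV[R]_d :=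
  \row_(i < d) (if ((blk_rank blk z i)%:Z < Num.ceil ((blk_size blk (blk i))%:R * alpha))%R
                then 1 else 0).

(* Full-batch MoFO, eps = 0.  [mofo_state t = (theta_t, m_t, v_t)]. *)
Fixpoint mofo_state (grad : 'rV[R]_d -> 'rV[R]_d) (blk : 'I_d -> 'I_B)
    (alpha beta1 beta2 : R) (eta : nat -> R) (theta0 : 'rV[R]_d) (t : nat)
    : 'rV[R]_d * 'rV[R]_d * 'rV[R]_d :=
  match t with
  | 0 => (theta0, 0, 0)
  | t'.+1 =>
    let: (th, m, v) := mofo_state grad blk alpha beta1 beta2 eta theta0 t' in
    let g := grad th in
    let m1 := beta1 *: m + (1 - beta1) *: g in
    let v1 := beta2 *: v + (1 - beta2) *: \row_(i < d) (g ord0 i ^+ 2) in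
    let mhat := (1 - beta1 ^+ t'.+1)^-1 *: m1 in
    let vhat := (1 - beta2 ^+ t'.+1)^-1 *: v1 in
    let mask := FLT blk alpha m1 in
    let th1 := th - eta t'.+1 *:
        \row_(i < d) (if vhat ord0 i == 0 then 0
                      else mhat ord0 i * mask ord0 i / Num.sqrt (vhat ord0 i)) in
    (th1, m1, v1)
  end.

Definition mofo_theta grad blk alpha beta1 beta2 eta theta0 t : 'rV[R]_d :=
  (mofo_state grad blk alpha beta1 beta2 eta theta0 t).1.1.

(* g_t = grad L(theta_{t-1}), for t >= 1. *)
Definition mofo_grad grad blk alpha beta1 beta2 eta theta0 t : 'rV[R]_d :=
  grad (mofo_theta grad blk alpha beta1 beta2 eta theta0 t.-1).

End MoFO.

(* Because [beta1 < sqrt beta2], an induction on the Adam moments shows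
   [|m_t| <= (1 - beta1) / (sqrt (1 - beta2) (1 - beta1 / sqrt beta2)) sqrt v_t]
   coordinatewise; the bias corrections only improve this, so every coordinate
   of a MoFO update has absolute value at most
   [1 / (sqrt (1 - beta2) (1 - beta1 / sqrt beta2))] and vanishes off the
   filter.  The filter keeps [ceil (d_k alpha%) < d_k alpha% + 1] coordinates of
   block [k], hence at most [d alpha% + B] in all, and each update has Euclidean
   norm at most [C].  Summing, [|theta_(t-1) - theta_(s-1)| <= C eta
   sum_(k=s)^(t-1) 1 / sqrt k], and [1 / sqrt k <= 2 sqrt 2 (sqrt (k+1) - sqrt k)]
   telescopes to [2 sqrt 2 (sqrt t - sqrt s) <= 2 sqrt 2 (t - s) / sqrt t]. *)

From HB Require Import structures.
From mathcomp Require Import all_boot all_order all_algebra.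
From mathcomp Require Import all_classical all_reals all_analysis.
From mathcomp Require Import ring lra.
Import Order.TTheory GRing.Theory Num.Theory.
Import numFieldNormedType.Exports.
Local Open Scope ring_scope.

Section EuclideanNorm.
Context {R : realType} {d : nat}.
Implicit Types x y : 'rV[R]_d.

Lemma norm2_ge0 x : 0 <= norm2 x.
Proof. exact: sqrtr_ge0. Qed.

Lemma norm2_sqr x : norm2 x ^+ 2 = \sum_(i < d) x ord0 i ^+ 2.
Proof. by rewrite sqr_sqrtr // sumr_ge0 // => i _; apply: sqr_ge0. Qed.

Lemma norm2_dim0 x : d = 0%N -> norm2 x = 0.
Proof. by move=> d0; rewrite /norm2 big_pred0 ?sqrtr0 // => -[i]; rewrite d0. Qed.

Lemma norm2_0 : norm2 (0 : 'rV[R]_d) = 0.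
Proof. by rewrite /norm2 big1 ?sqrtr0 // => i _; rewrite mxE expr0n. Qed.

Lemma norm2Z a x : norm2 (a *: x) = `|a| * norm2 x.
Proof.
rewrite /norm2 -sqrtr_sqr -sqrtrM ?sqr_ge0 // mulr_sumr.
by congr Num.sqrt; apply: eq_bigr => i _; rewrite mxE exprMn.
Qed.

Lemma normr_coord_le_norm2 x i : `|x ord0 i| <= norm2 x.
Proof.
rewrite -sqrtr_sqr ler_wsqrtr // (bigD1 i) //= lerDl.
by apply: sumr_ge0 => j _; apply: sqr_ge0.
Qed.

Lemma dotp_sqr_le x y : dotp x y ^+ 2 <= norm2 x ^+ 2 * norm2 y ^+ 2.
Proof.
pose a i j := x ord0 i ^+ 2 * y ord0 j ^+ 2.
pose b i j := x ord0 i * y ord0 i * (x ord0 j * y ord0 j).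
have lagrange : \sum_(i < d) \sum_(j < d) (x ord0 i * y ord0 j - x ord0 j * y ord0 i) ^+ 2
    = \sum_(i < d) \sum_(j < d) a i j + \sum_(i < d) \sum_(j < d) a j i
      - 2 * \sum_(i < d) \sum_(j < d) b i j.
  rewrite mulr_sumr -big_split -sumrB /=; apply: eq_bigr => i _.
  rewrite mulr_sumr -big_split -sumrB /=; apply: eq_bigr => j _.
  rewrite /a /b; ring.
have : 0 <= \sum_(i < d) \sum_(j < d) (x ord0 i * y ord0 j - x ord0 j * y ord0 i) ^+ 2.
  by do 2!(apply: sumr_ge0 => ? _); apply: sqr_ge0.
rewrite lagrange (exchange_big _ _ _ _ _ (fun j i => a i j)) /=.
have -> : \sum_(i < d) \sum_(j < d) a i j = norm2 x ^+ 2 * norm2 y ^+ 2.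
  by rewrite !norm2_sqr mulr_suml; apply: eq_bigr => i _; rewrite mulr_sumr.
have -> : \sum_(i < d) \sum_(j < d) b i j = dotp x y ^+ 2.
  by rewrite /dotp expr2 mulr_suml; apply: eq_bigr => i _; rewrite mulr_sumr.
lra.
Qed.

Lemma dotp_le_norm2 x y : dotp x y <= norm2 x * norm2 y.
Proof.
apply: (le_trans (ler_norm _)).
rewrite -sqrtr_sqr -(ger0_norm (mulr_ge0 (norm2_ge0 x) (norm2_ge0 y))) -sqrtr_sqr.
by rewrite ler_wsqrtr // exprMn dotp_sqr_le.
Qed.

Lemma norm2D_le x y : norm2 (x + y) <= norm2 x + norm2 y.
Proof.
rewrite -(ger0_norm (addr_ge0 (norm2_ge0 x) (norm2_ge0 y))) -sqrtr_sqr ler_wsqrtr //.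
have -> : \sum_(i < d) (x + y) ord0 i ^+ 2 = norm2 x ^+ 2 + 2 * dotp x y + norm2 y ^+ 2.
  rewrite !norm2_sqr /dotp mulr_sumr -!big_split /=.
  by apply: eq_bigr => i _; rewrite mxE; ring.
by have := dotp_le_norm2 x y; nra.
Qed.
End EuclideanNorm.

Lemma lipschitz_const_ge0 {R : realType} {d n : nat} (F : 'rV[R]_d -> 'rV[R]_n) (L : R) :
  (0 < d)%N -> (forall x y, norm2 (F x - F y) <= L * norm2 (x - y)) -> 0 <= L.
Proof.
move=> d_gt0 F_lip.
have one_gt0 : 0 < norm2 (const_mx 1 - 0 : 'rV[R]_d).
  rewrite subr0 sqrtr_gt0 (bigD1 (Ordinal d_gt0)) //= mxE expr1n ltr_pwDl //.
  by apply: sumr_ge0 => i _; apply: sqr_ge0.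
by rewrite -(pmulr_lge0 _ one_gt0) (le_trans (norm2_ge0 _) (F_lip _ _)).
Qed.

Section TopFraction.
Context {R : realType} {d B : nat}.
Variables (blk : 'I_d -> 'I_B) (z : 'rV[R]_d).

Definition outranks (j i : 'I_d) : bool :=
  (`|z ord0 i| < `|z ord0 j|) || ((`|z ord0 j| == `|z ord0 i|) && (j < i)%N).

Lemma blk_rankE i : blk_rank blk z i = #|[set j | (blk j == blk i) && outranks j i]|.
Proof. by []. Qed.

Lemma outranks_irr i : ~~ outranks i i.
Proof. by rewrite /outranks ltxx ltnn andbF. Qed.

Lemma outranks_trans i j k : outranks k j -> outranks j i -> outranks k i.
Proof.
rewrite /outranks => /orP[kj|/andP[/eqP kj lt_kj]] /orP[ji|/andP[/eqP ji lt_ji]].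
- by rewrite (lt_trans ji kj).
- by rewrite -ji kj.
- by rewrite kj ji.
- by rewrite kj ji eqxx (ltn_trans lt_kj lt_ji) orbT.
Qed.

Lemma outranks_total i j : i != j -> outranks i j || outranks j i.
Proof.
rewrite /outranks => neq_ij.
case: (ltgtP `|z ord0 i| `|z ord0 j|) => //= _.
by case: ltngtP => // /val_inj eq_ij; rewrite eq_ij eqxx in neq_ij.
Qed.

Lemma blk_rank_lt i j : blk j = blk i -> outranks j i ->
  (blk_rank blk z j < blk_rank blk z i)%N.
Proof.
move=> blk_ji ji; rewrite !blk_rankE; apply: proper_card; apply/properP; split.
  apply/fintype.subsetP => k; rewrite !inE => /andP[/eqP -> kj].
  by rewrite blk_ji eqxx (outranks_trans _ _ _ kj ji).
by exists j; rewrite !inE ?blk_ji ?eqxx // (negPf (outranks_irr j)) andbF.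
Qed.

Lemma blk_rank_inj i j : blk i = blk j -> blk_rank blk z i = blk_rank blk z j -> i = j.
Proof.
move=> blk_ij rank_ij; apply/eqP/negPn/negP => /outranks_total/orP[ij|ji].
  by have := blk_rank_lt _ _ blk_ij ij; rewrite rank_ij ltnn.
by have := blk_rank_lt _ _ (esym blk_ij) ji; rewrite rank_ij ltnn.
Qed.

Lemma card_blk_rank_lt (k : 'I_B) (n : nat) :
  (#|[set i | (blk i == k) && (blk_rank blk z i < n)%N]| <= n)%N.
Proof.
rewrite cardE -(size_map (blk_rank blk z)) -[n in (_ <= n)%N](size_iota 0).
apply: uniq_leq_size.
  rewrite map_inj_in_uniq ?enum_uniq // => i j; rewrite !mem_enum !inE.
  by move=> /andP[/eqP blk_i _] /andP[/eqP blk_j _]; apply: blk_rank_inj; rewrite blk_i blk_j.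
by move=> r /mapP[i]; rewrite mem_enum inE => /andP[_ lt_in] ->; rewrite mem_iota.
Qed.

Lemma sum_FLT_sqr_le (alpha : R) : 0 <= alpha ->
  \sum_(i < d) FLT blk alpha z ord0 i ^+ 2 <= d%:R * alpha + B%:R.
Proof.
move=> alpha_ge0.
pose n k := `|Num.ceil ((blk_size blk k)%:R * alpha)|%N.
have ceilE k : Num.ceil ((blk_size blk k)%:R * alpha) = (n k)%:Z.
  by rewrite gez0_abs // ceil_ge0 (lt_le_trans (ltrN10 R)) // mulr_ge0.
have -> : \sum_(i < d) FLT blk alpha z ord0 i ^+ 2 =
    \sum_(k < B) (#|[set i | (blk i == k) && (blk_rank blk z i < n k)%N]|%:R : R).
  rewrite (partition_big blk xpredT) //=; apply: eq_bigr => k _.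
  rewrite -sum1_card natr_sum [LHS]big_mkcond [RHS]big_mkcond; apply: eq_bigr => i _.
  rewrite inE mxE; case: eqP => //= <-.
  by rewrite ceilE ltz_nat; case: ifP; rewrite ?expr1n ?expr0n.
have -> : d%:R = \sum_(k < B) (blk_size blk k)%:R :> R.
  rewrite -natr_sum -[d in LHS]card_ord -sum1_card (partition_big blk xpredT) //=.
  by congr _%:R; apply: eq_bigr => k _; rewrite /blk_size -sum1_card; apply: eq_bigl => i; rewrite inE.
rewrite mulr_suml -[B in X in _ <= _ + X]card_ord -sum1_card natr_sum -big_split /=.
apply: ler_sum => k _.
have := ceilB1_lt ((blk_size blk k)%:R * alpha); rewrite ceilE intrD.
have := card_blk_rank_lt k (n k); rewrite -(ler_nat R) => card_le.
lra.
Qed.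
End TopFraction.

Section ScalarBounds.
Context {R : realType}.
Implicit Types a b c m v x X Y gamma : R.

Lemma convex_le_sqrt_add_sqr gamma X Y : 0 <= gamma <= 1 -> 0 <= X -> 0 <= Y ->
  gamma * X + (1 - gamma) * Y <= Num.sqrt (X ^+ 2 + Y ^+ 2).
Proof.
move=> /andP[gamma_ge0 gamma_le1] X_ge0 Y_ge0.
rewrite -[leLHS]ger0_norm ?addr_ge0 ?mulr_ge0 ?subr_ge0 // -sqrtr_sqr ler_wsqrtr //.
have gammaC_ge0 : 0 <= 1 - gamma by rewrite subr_ge0.
have := mulr_ge0 (mulr_ge0 gamma_ge0 gammaC_ge0) (sqr_ge0 (X - Y)).
have := mulr_ge0 gammaC_ge0 (sqr_ge0 X); have := mulr_ge0 gamma_ge0 (sqr_ge0 Y).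
nra.
Qed.

(* For [sqrt v = 0] this holds because [m / 0 = 0]. *)
Lemma normr_div_sqrt_le m v c : 0 <= c -> `|m| <= c * Num.sqrt v -> `|m / Num.sqrt v| <= c.
Proof.
move=> c_ge0 m_le; have [sqrt_v_gt0|sqrt_v_le0] := ltrP 0 (Num.sqrt v).
  by rewrite normrM normfV (gtr0_norm sqrt_v_gt0) ler_pdivrMr.
have -> : Num.sqrt v = 0 by apply/eqP; rewrite eq_le sqrt_v_le0 sqrtr_ge0.
by rewrite invr0 mulr0 normr0.
Qed.

Lemma bias_corrected_ratio_le m v c a b : 0 <= c -> 0 < a -> 0 < b <= 1 ->
  `|m| <= c * Num.sqrt v -> `|a^-1 * m / Num.sqrt (b^-1 * v)| <= c / a.
Proof.
move=> c_ge0 a_gt0 /andP[b_gt0 b_le1] /(normr_div_sqrt_le _ _ _ c_ge0) ratio_le.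
have sqrt_b_gt0 : 0 < Num.sqrt b by rewrite sqrtr_gt0.
have sqrt_b_le1 : Num.sqrt b <= 1 by rewrite -sqrtr1 ler_wsqrtr.
have -> : a^-1 * m / Num.sqrt (b^-1 * v) = m / Num.sqrt v * (Num.sqrt b / a).
  by rewrite sqrtrM ?invr_ge0 ?ltW // sqrtrV ?ltW // invfM invrK; ring.
have factor_ge0 : 0 <= Num.sqrt b / a by rewrite divr_ge0 ?ltW.
by rewrite normrM (ger0_norm factor_ge0) ler_pM // -[leRHS]mul1r ler_wpM2r // invr_ge0 ltW.
Qed.

Lemma bias_correction_gt0 x n : 0 <= x < 1 -> 0 < 1 - x ^+ n.+1.
Proof. by case/andP=> x_ge0 x_lt1; rewrite subr_gt0 exprn_ilt1. Qed.

Lemma bias_correction_le1 x n : 0 <= x -> 1 - x ^+ n.+1 <= 1.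
Proof. by move=> x_ge0; rewrite lerBlDr lerDl exprn_ge0. Qed.

Lemma bias_correction_ge x n : 0 <= x <= 1 -> 1 - x <= 1 - x ^+ n.+1.
Proof.
by case/andP=> x_ge0 x_le1; rewrite lerB // exprSr ler_piMl // exprn_ile1.
Qed.

End ScalarBounds.

Definition moment_ratio_denom {R : realType} (beta1 beta2 : R) : R :=
  Num.sqrt (1 - beta2) * (1 - beta1 / Num.sqrt beta2).
Definition moment_ratio_bound {R : realType} (beta1 beta2 : R) : R :=
  (1 - beta1) / moment_ratio_denom beta1 beta2.

Section MomentRatio.
Context {R : realType} {beta1 beta2 : R}.
Hypotheses (beta1_gt0 : 0 < beta1) (beta1_lt_sqrt_beta2 : beta1 < Num.sqrt beta2)
  (sqrt_beta2_lt1 : Num.sqrt beta2 < 1).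

Lemma beta1_lt1 : beta1 < 1.
Proof. exact: lt_trans beta1_lt_sqrt_beta2 sqrt_beta2_lt1. Qed.

Lemma beta2_gt0 : 0 < beta2.
Proof. by rewrite -sqrtr_gt0 (lt_trans beta1_gt0). Qed.

Lemma beta2_lt1 : beta2 < 1.
Proof. by rewrite -(ltr_sqrt _ ltr01) sqrtr1. Qed.

Lemma moment_ratio_denom_gt0 : 0 < moment_ratio_denom beta1 beta2.
Proof.
rewrite mulr_gt0 ?sqrtr_gt0 ?subr_gt0 ?beta2_lt1 // ltr_pdivrMr ?mul1r //.
by rewrite (lt_trans beta1_gt0).
Qed.

Lemma moment_ratio_bound_ge0 : 0 <= moment_ratio_bound beta1 beta2.
Proof. by rewrite divr_ge0 ?subr_ge0 ?ltW ?beta1_lt1 ?moment_ratio_denom_gt0. Qed.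

(* With [X = sqrt beta2 sqrt v], [Y = sqrt (1 - beta2) |g|] and
   [gamma = beta1 / sqrt beta2], the triangle inequality bounds the left side by
   [c (gamma X + (1 - gamma) Y)], and the new right side is [c sqrt (X^2 + Y^2)]. *)
Lemma ema_moment_ratio_step m v g : 0 <= v ->
  `|m| <= moment_ratio_bound beta1 beta2 * Num.sqrt v ->
  `|beta1 * m + (1 - beta1) * g| <=
    moment_ratio_bound beta1 beta2 * Num.sqrt (beta2 * v + (1 - beta2) * g ^+ 2).
Proof.
move=> v_ge0 m_le.
set c := moment_ratio_bound beta1 beta2 in m_le *.
set s2 := Num.sqrt beta2; set s1 := Num.sqrt (1 - beta2); set gamma := beta1 / s2.
have s2_gt0 : 0 < s2 := lt_trans beta1_gt0 beta1_lt_sqrt_beta2.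
have s1_gt0 : 0 < s1 by rewrite sqrtr_gt0 subr_gt0 beta2_lt1.
have gamma01 : 0 <= gamma <= 1.
  by rewrite /gamma divr_ge0 ?(ltW beta1_gt0) ?(ltW s2_gt0) //= ler_pdivrMr // mul1r ltW.
pose X := s2 * Num.sqrt v; pose Y := s1 * `|g|.
have -> : beta2 * v + (1 - beta2) * g ^+ 2 = X ^+ 2 + Y ^+ 2.
  rewrite /X /Y !exprMn !sqr_sqrtr ?subr_ge0 ?(ltW beta2_gt0) ?(ltW beta2_lt1) //.
  by rewrite real_normK ?num_real.
have X_ge0 : 0 <= X := mulr_ge0 (ltW s2_gt0) (sqrtr_ge0 v).
have Y_ge0 : 0 <= Y := mulr_ge0 (ltW s1_gt0) (normr_ge0 g).
apply: le_trans (ler_wpM2l moment_ratio_bound_ge0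
  (convex_le_sqrt_add_sqr _ _ _ gamma01 X_ge0 Y_ge0)).
have -> : c * (gamma * X + (1 - gamma) * Y) = beta1 * (c * Num.sqrt v) + (1 - beta1) * `|g|.
  rewrite /c /moment_ratio_bound /moment_ratio_denom -/s1 -/s2 /X /Y /gamma; field.
  by rewrite !lt0r_neq0 ?subr_gt0.
apply: (le_trans (ler_normD _ _)).
have beta1C_gt0 : 0 < 1 - beta1 by rewrite subr_gt0 beta1_lt1.
rewrite !normrM (gtr0_norm beta1_gt0) (gtr0_norm beta1C_gt0).
by rewrite lerD // ler_wpM2l // ltW.
Qed.
End MomentRatio.

Section MoFODynamics.
Context {R : realType} {d B : nat}.
Variables (grad : 'rV[R]_d -> 'rV[R]_d) (blk : 'I_d -> 'I_B)
  (alpha beta1 beta2 : R) (eta : nat -> R) (theta0 : 'rV[R]_d).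
Hypotheses (beta1_gt0 : 0 < beta1) (beta1_lt_sqrt_beta2 : beta1 < Num.sqrt beta2)
  (sqrt_beta2_lt1 : Num.sqrt beta2 < 1) (alpha_ge0 : 0 <= alpha).

Let state := mofo_state grad blk alpha beta1 beta2 eta theta0.
Let theta := mofo_theta grad blk alpha beta1 beta2 eta theta0.
Let mom1 t := (state t).1.2.
Let mom2 t := (state t).2.
Let step t : 'rV[R]_d :=
  let mhat := (1 - beta1 ^+ t.+1)^-1 *: mom1 t.+1 in
  let vhat := (1 - beta2 ^+ t.+1)^-1 *: mom2 t.+1 in
  \row_(i < d) (if vhat ord0 i == 0 then 0
                else mhat ord0 i * FLT blk alpha (mom1 t.+1) ord0 i / Num.sqrt (vhat ord0 i)).

Lemma mom1S t : mom1 t.+1 = beta1 *: mom1 t + (1 - beta1) *: grad (theta t).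
Proof. by rewrite /mom1 /theta /mofo_theta /state /=; case: mofo_state => [[]]. Qed.

Lemma mom2S t :
  mom2 t.+1 = beta2 *: mom2 t + (1 - beta2) *: \row_(i < d) (grad (theta t) ord0 i ^+ 2).
Proof. by rewrite /mom2 /theta /mofo_theta /state /=; case: mofo_state => [[]]. Qed.

Lemma thetaS t : theta t.+1 = theta t - eta t.+1 *: step t.
Proof.
rewrite /step mom1S mom2S /mom1 /mom2 /theta /mofo_theta /state /=.
by case: mofo_state => [[]].
Qed.

Let b1_lt1 : beta1 < 1 := beta1_lt1 beta1_lt_sqrt_beta2 sqrt_beta2_lt1.
Let b2_gt0 : 0 < beta2 := beta2_gt0 beta1_gt0 beta1_lt_sqrt_beta2.
Let b2_lt1 : beta2 < 1 := beta2_lt1 sqrt_beta2_lt1.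
Let c_ge0 : 0 <= moment_ratio_bound beta1 beta2 :=
  moment_ratio_bound_ge0 beta1_gt0 beta1_lt_sqrt_beta2 sqrt_beta2_lt1.
Let K_ge0 : 0 <= (moment_ratio_denom beta1 beta2)^-1.
Proof. by rewrite invr_ge0 ltW // moment_ratio_denom_gt0. Qed.

Lemma mom2_ge0 t i : 0 <= mom2 t ord0 i.
Proof.
elim: t => [|t IHt]; first by rewrite /mom2 /= mxE.
rewrite mom2S !mxE; apply: addr_ge0; apply: mulr_ge0; rewrite ?sqr_ge0 //.
  exact: ltW b2_gt0.
by rewrite subr_ge0 ltW.
Qed.

Lemma mom1_le t i :
  `|mom1 t ord0 i| <= moment_ratio_bound beta1 beta2 * Num.sqrt (mom2 t ord0 i).
Proof.
elim: t => [|t IHt]; first by rewrite /mom1 /= mxE normr0 mulr_ge0 ?sqrtr_ge0.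
rewrite mom1S mom2S !mxE.
exact: ema_moment_ratio_step (mom2_ge0 t i) IHt.
Qed.

Lemma step_coord_le t i :
  `|step t ord0 i| <= (moment_ratio_denom beta1 beta2)^-1 * `|FLT blk alpha (mom1 t.+1) ord0 i|.
Proof.
rewrite /step mxE; set mask := FLT _ _ _ ord0 i; rewrite !mxE.
case: ifP => _; first by rewrite normr0 mulr_ge0.
have a_gt0 : 0 < 1 - beta1 ^+ t.+1 by rewrite bias_correction_gt0 ?(ltW beta1_gt0).
have b01 : 0 < 1 - beta2 ^+ t.+1 <= 1.
  by rewrite bias_correction_gt0 ?bias_correction_le1 ?(ltW b2_gt0).
rewrite mulrAC normrM ler_wpM2r //.
apply: (le_trans (bias_corrected_ratio_le _ _ _ _ _ c_ge0 a_gt0 b01 (mom1_le t.+1 i))).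
rewrite /moment_ratio_bound mulrAC ler_piMl // ler_pdivrMr // mul1r.
by rewrite bias_correction_ge // !ltW.
Qed.

Lemma norm2_step_le t :
  norm2 (step t) <= Num.sqrt (d%:R * alpha + B%:R) / moment_ratio_denom beta1 beta2.
Proof.
rewrite /norm2 mulrC -(ger0_norm K_ge0) -sqrtr_sqr -sqrtrM ?sqr_ge0 // ler_wsqrtr //.
apply: le_trans _ (ler_wpM2l (sqr_ge0 _) (sum_FLT_sqr_le blk (mom1 t.+1) _ alpha_ge0)).
rewrite mulr_sumr; apply: ler_sum => i _.
rewrite -[step t ord0 i ^+ 2]real_normK ?num_real //.
rewrite -[FLT _ _ _ _ _ ^+ 2]real_normK ?num_real // -exprMn.
by apply: lerXn2r; rewrite ?nnegrE ?mulr_ge0 // step_coord_le.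
Qed.

Lemma norm2_theta_sub_le s t : (forall k, 0 <= eta k) -> (s <= t)%N ->
  norm2 (theta t - theta s) <=
    Num.sqrt (d%:R * alpha + B%:R) / moment_ratio_denom beta1 beta2 *
    \sum_(s <= k < t) eta k.+1.
Proof.
move=> eta_ge0; elim: t => [|t IHt].
  by rewrite leqn0 => /eqP ->; rewrite subrr norm2_0 big_geq ?mulr0.
rewrite leq_eqVlt => /orP[/eqP <-|lt_st]; first by rewrite subrr norm2_0 big_geq ?mulr0.
rewrite big_nat_recr //= mulrDr thetaS.
have -> : theta t - eta t.+1 *: step t - theta s = (theta t - theta s) + (- eta t.+1) *: step t.
  by rewrite scaleNr addrAC.
apply: le_trans (norm2D_le _ _) _; apply: lerD; first exact: IHt.
by rewrite norm2Z normrN ger0_norm // [leLHS]mulrC ler_wpM2r // norm2_step_le.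
Qed.

End MoFODynamics.

Section InverseSqrtSum.
Context {R : realType}.

Lemma inv_sqrt_le_sqrt_diff (x : R) : 1 <= x ->
  (Num.sqrt x)^-1 <= 2 * Num.sqrt 2 * (Num.sqrt (x + 1) - Num.sqrt x).
Proof.
move=> x_ge1; set a := Num.sqrt x; set b := Num.sqrt (x + 1).
have r2 : Num.sqrt 2 ^+ 2 = 2 :> R by rewrite sqr_sqrtr.
have r_ge1 : 1 <= Num.sqrt 2 :> R by rewrite -{1}sqrtr1 ler_wsqrtr //; lra.
have a_ge1 : 1 <= a by rewrite -sqrtr1 ler_wsqrtr.
have a2 : a ^+ 2 = x by rewrite sqr_sqrtr // (le_trans ler01).
have b2 : b ^+ 2 = x + 1 by rewrite sqr_sqrtr // addr_ge0 // (le_trans ler01).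
have b_ge0 : 0 <= b := sqrtr_ge0 _.
have b_le : b <= Num.sqrt 2 * a.
  rewrite -[leLHS]ger0_norm // -[leRHS]ger0_norm ?mulr_ge0 ?(le_trans ler01) //.
  by rewrite -sqrtr_sqr -[X in _ <= X]sqrtr_sqr ler_wsqrtr // exprMn r2 a2 b2; lra.
have conj : (b - a) * (b + a) = 1 by rewrite -subr_sqr b2 a2; ring.
rewrite -[a^-1]mulr1 ler_pdivrMl ?(lt_le_trans ltr01) //.
nra.
Qed.

Lemma sqrt_sub_le_div (a b : R) : 0 <= b <= a -> 0 < a ->
  Num.sqrt a - Num.sqrt b <= (a - b) / Num.sqrt a.
Proof.
move=> /andP[b_ge0 b_le_a] a_gt0; have sa_gt0 : 0 < Num.sqrt a by rewrite sqrtr_gt0.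
have sb_le : Num.sqrt b <= Num.sqrt a by rewrite ler_wsqrtr.
rewrite ler_pdivlMr // -[in leRHS](sqr_sqrtr (ltW a_gt0)) -[in leRHS](sqr_sqrtr b_ge0).
have : 0 <= Num.sqrt b * (Num.sqrt a - Num.sqrt b) by rewrite mulr_ge0 ?sqrtr_ge0 ?subr_ge0.
nra.
Qed.

Lemma sum_inv_sqrt_le s t : (s <= t)%N ->
  \sum_(s <= k < t) (Num.sqrt (k.+1%:R : R))^-1 <=
    2 * Num.sqrt 2 * (t - s)%:R / Num.sqrt t.+1%:R.
Proof.
move=> le_st.
have term_le k : (Num.sqrt (k.+1%:R : R))^-1 <=
    2 * Num.sqrt 2 * (Num.sqrt k.+2%:R - Num.sqrt k.+1%:R).
  by rewrite -[k.+2]addn1 natrD inv_sqrt_le_sqrt_diff // ler1n.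
apply: le_trans (ler_sum _ (fun k _ => term_le k)) _.
rewrite -mulr_sumr (telescope_sumr (fun k => Num.sqrt k.+1%:R)) // -mulrA ler_wpM2l //.
by rewrite -[(t - s)%N]subSS natrB // sqrt_sub_le_div // ler0n ler_nat.
Qed.

End InverseSqrtSum.

Theorem lemma3 (R : realType) (d B : nat) (blk : 'I_d -> 'I_B)
  (alpha beta1 beta2 eta Lc : R)
  (f : 'rV[R]_d -> R) (grad : 'rV[R]_d -> 'rV[R]_d) (theta0 : 'rV[R]_d) :
  (forall k : 'I_B, exists i : 'I_d, blk i = k) ->
  0 < alpha <= 1 ->
  0 < beta1 -> 0 < beta2 -> beta1 < Num.sqrt beta2 -> Num.sqrt beta2 < 1 ->
  0 < eta ->
  is_gradient f grad ->
  (forall x y, norm2 (grad x - grad y) <= Lc * norm2 (x - y)) ->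
  let C := Num.sqrt (d%:R * alpha + B%:R) /
             (Num.sqrt (1 - beta2) * (1 - beta1 / Num.sqrt beta2)) in
  let g := mofo_grad grad blk alpha beta1 beta2
             (fun t => eta / Num.sqrt t%:R) theta0 in
  forall (t s : nat) (i : 'I_d), (1 <= s)%N -> (s <= t)%N ->
    `|g t ord0 i - g s ord0 i| <= norm2 (g t - g s) /\
    norm2 (g t - g s) <= 2 * Num.sqrt 2 * Lc * C * eta * (t - s)%:R / Num.sqrt t%:R.
Proof.
move=> blk_onto /andP[alpha_gt0 _] beta1_gt0 _ beta1_lt sqrt_beta2_lt1 eta_gt0 _ grad_lip
  C g t s i s_ge1 le_st.
split; first by have := normr_coord_le_norm2 (g t - g s) i; rewrite !mxE.
have [d0|d_gt0] := posnP d.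
  (* [blk] is onto, so [B = 0] as well and both sides vanish. *)
  have [B0|B_gt0] := posnP B; last first.
    by have [[j lt_jd] _] := blk_onto (Ordinal B_gt0); rewrite d0 in lt_jd.
  by rewrite norm2_dim0 // /C d0 B0 mul0r addr0 sqrtr0 mul0r !(mulr0, mul0r).
have Lc_ge0 := lipschitz_const_ge0 _ _ d_gt0 grad_lip.
have C_ge0 : 0 <= C.
  by rewrite divr_ge0 ?sqrtr_ge0 ?ltW ?moment_ratio_denom_gt0.
have eta_ge0 k : 0 <= eta / Num.sqrt k%:R by rewrite divr_ge0 ?sqrtr_ge0 ?ltW.
case: t s le_st s_ge1 => [|t] [|s] //; rewrite ltnS => le_st _.
apply: le_trans (grad_lip _ _) _; rewrite !succnK.
have theta_le := norm2_theta_sub_le grad blk alpha beta1 beta2 _ theta0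
  beta1_gt0 beta1_lt sqrt_beta2_lt1 (ltW alpha_gt0) _ _ eta_ge0 le_st.
apply: le_trans (ler_wpM2l Lc_ge0 theta_le) _.
rewrite -mulr_sumr subSS; set S := \sum_(s <= k < t) _.
change (Lc * (C * (eta * S)) <= 2 * Num.sqrt 2 * Lc * C * eta * (t - s)%:R / Num.sqrt t.+1%:R).
have -> : 2 * Num.sqrt 2 * Lc * C * eta * (t - s)%:R / Num.sqrt t.+1%:R =
    Lc * C * eta * (2 * Num.sqrt 2 * (t - s)%:R / Num.sqrt t.+1%:R) by ring.
rewrite [leLHS]mulrA [leLHS]mulrA ler_wpM2l ?sum_inv_sqrt_le //.
exact: mulr_ge0 (mulr_ge0 Lc_ge0 C_ge0) (ltW eta_gt0).
Qed.
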